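(* Let $a\in \mathcal{A}$. Then $a\in \mathcal{A}^{\mathrm{gcEP}}$ if and only if (1) $a\in \mathcal{A}^d$; and (2) there exists a projection $q\in \mathcal{A}$ such that $\ell(a^d)=\ell(q)$. In this case, $a^{\mathrm{gcEP}}=a^dq$.
   Context: $\mathcal{A}$ is a complex Banach *-algebra with identity; a projection is $q$ with $q=q^2=q^*$. $\mathcal{A}^d$ is the set of generalized Drazin invertible elements, with $a^d$ the generalized Drazin inverse ($a(a^d)^2=a^d$, $aa^d=a^da$, $a-a^2a^d$ quasinilpotent). $a$ has a generalized core-EP inverse if there is $x\in\mathcal{A}$ with $x=ax^2$, $(ax)^*=ax$, $\lim_{n\to\infty}\|a^n-xa^{n+1}\|^{1/n}=0$; this $x$ is unique, denoted $a^{\mathrm{gcEP}}$, and $\mathcal{A}^{\mathrm{gcEP}}$ is the set of such $a$. $\ell(\cdot)$ denotes the left annihilator. *)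

From HB Require Import structures.
From mathcomp Require Import all_boot all_order all_algebra.
From mathcomp Require Import all_classical all_reals all_analysis.
From mathcomp Require Import complex.
Set Implicit Arguments. Unset Strict Implicit. Unset Printing Implicit Defensive.
Import Order.TTheory GRing.Theory Num.Theory.
Import numFieldNormedType.Exports.
Local Open Scope ring_scope.
Local Open Scope complex_scope.
Local Open Scope classical_set_scope.

(* The underlying unital complex
   algebra is [A : algType R[i]] (R[i] = the complex numbers over a real
   field R : realType; algType is a non-trivial ring, i.e. 1 != 0). *)
Record BanachStar (R : realType) (A : algType R[i]) := {
  nrm : A -> R;
  star : A -> A;
  nrm_eq0 : forall x, nrm x = 0 <-> x = 0;
  nrm_ge0 : forall x, 0 <= nrm x;
  nrm_triangle : forall x y, nrm (x + y) <= nrm x + nrm y;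
  nrmZ : forall (c : R[i]) x, nrm (c *: x) = complex.Re `|c| * nrm x;
  nrm_submul : forall x y, nrm (x * y) <= nrm x * nrm y;
  nrm1 : nrm 1 = 1;
  nrm_complete : forall u : nat -> A,
    (forall e : R, 0 < e -> exists N, forall m n, (N <= m)%N -> (N <= n)%N ->
        nrm (u m - u n) < e) ->
    exists l, forall e : R, 0 < e -> exists N, forall n, (N <= n)%N ->
        nrm (u n - l) < e;
  starD : forall x y, star (x + y) = star x + star y;
  starZ : forall (c : R[i]) x, star (c *: x) = c^* *: star x;
  starM : forall x y, star (x * y) = star y * star x;
  starK : forall x, star (star x) = x
}.

Section Defs.
Context {R : realType} {A : algType R[i]} (B : BanachStar A).

Definition is_projection (q : A) : Prop := q = q * q /\ q = star B q.

(* quasinilpotent, via the spectral radius formula: ||x^n||^(1/n) -> 0 *)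
Definition quasinilpotent (x : A) : Prop :=
  (fun n : nat => powR (nrm B (x ^+ n)) (n%:R^-1)) @ \oo --> (0 : R).

Definition is_gDrazin_inv (a b : A) : Prop :=
  a * (b * b) = b /\ a * b = b * a /\ quasinilpotent (a - a * a * b).

Definition gDrazin_invertible (a : A) : Prop := exists b, is_gDrazin_inv a b.

(* a^d (unique when it exists; chosen by classical choice, 0 otherwise) *)
Definition gDrazin_inv (a : A) : A := xget 0 [set b | is_gDrazin_inv a b].

Definition is_gcEP_inv (a x : A) : Prop :=
  x = a * (x * x) /\ star B (a * x) = a * x /\
  (fun n : nat => powR (nrm B (a ^+ n - x * a ^+ n.+1)) (n%:R^-1)) @ \oo
     --> (0 : R).

Definition gcEP_invertible (a : A) : Prop := exists x, is_gcEP_inv a x.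

(* a^gcEP (unique when it exists; chosen by classical choice) *)
Definition gcEP_inv (a : A) : A := xget 0 [set x | is_gcEP_inv a x].

Definition lann (x : A) : set A := [set y | y * x = 0].

End Defs.

(* Write p = a x for a generalized core-EP inverse x of a.  Then x a x = x,
   p is a projection, a p = p a p, and (1 - p) a^n = (1 - p)(a^n - x a^(n+1))
   decays faster than any geometric sequence, so a is "upper triangular" with
   respect to p: invertible in the corner p A p (inverse x) and quasinilpotent
   in the corner (1 - p) A (1 - p).  The generalized Drazin inverse is then
   d = x + X, where X = sum_k x^k w a^k with w = x^2 a (1 - p) solves the
   Sylvester equation X = w + x X a, and d p = x, p d = d give l(d) = l(p).
   Conversely, if l(a^d) = l(q) for a projection q, then q a^d = a^d and
   a a^d q = q, so a (a^d q) = q is self-adjoint and a^n - a^d q a^(n+1) is a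
   combination of the rapidly decaying (1 - a a^d) a^n.  Both inverses are
   unique, which identifies a^gcEP with a^d q.  The n-th root conditions of
   the definitions are handled through the equivalent, more algebraic
   "f n <= rho^n eventually, for every rho > 0". *)

From HB Require Import structures.
From mathcomp Require Import all_boot all_order all_algebra.
From mathcomp Require Import all_classical all_reals all_analysis.
From mathcomp Require Import complex lra.
Import Order.TTheory GRing.Theory Num.Theory.
Import numFieldNormedType.Exports.
Local Open Scope ring_scope.
Local Open Scope classical_set_scope.

Section Idempotents.
Set Implicit Arguments. Unset Strict Implicit.
Context {T : ringType}.
Implicit Types a e y : T.

Lemma expr_idem e n : e * e = e -> e ^+ n.+1 = e.
Proof. by move=> ee; elim: n => [|n IH]; rewrite ?expr1 // exprS IH. Qed.

Lemma mul1Bl_eq0 e y : ((1 - e) * y == 0) = (e * y == y).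
Proof. by rewrite mulrBl mul1r subr_eq0 eq_sym. Qed.

Lemma idem_subr1 e : e * e = e -> (1 - e) * (1 - e) = 1 - e.
Proof. by move=> ee; rewrite mulrBl mul1r mulrBr mulr1 ee subrr subr0. Qed.

Lemma expr_mul_idem a e n : e * e = e -> a * e = e * a ->
  (a * e) ^+ n.+1 = e * a ^+ n.+1.
Proof.
move=> ee ae; rewrite exprMn_comm // (expr_idem n ee).
exact: (esym (commrX _ (esym ae))).
Qed.

Lemma comm_subr1 a e : a * e = e * a -> a * (1 - e) = (1 - e) * a.
Proof. by move=> ae; rewrite mulrBr mulrBl mulr1 mul1r ae. Qed.

End Idempotents.

Section RapidDecay.
Set Implicit Arguments. Unset Strict Implicit.
Context {R : realType}.
Implicit Types (f g : nat -> R) (rho : R).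

Definition rapid f := forall rho, 0 < rho -> \forall n \near \oo, f n <= rho ^+ n.

Lemma ler_expr_div {x c : R} {n} : 0 <= x -> 1 <= c -> (0 < n)%N ->
  (x / c) ^+ n <= x ^+ n / c.
Proof.
move=> x0 c1; case: n => // n _; have c0 : 0 < c by apply: lt_le_trans c1.
rewrite expr_div_n ler_wpM2l ?exprn_ge0 // lef_pV2 ?posrE ?exprn_gt0 //.
by rewrite exprS ler_pMr // exprn_ege1.
Qed.

Lemma powR_invnK {y : R} {n} : 0 <= y -> (0 < n)%N -> (y `^ n%:R^-1) ^+ n = y.
Proof.
move=> y0 n0; rewrite -powR_mulrn ?powR_ge0 // -powRrM mulVf ?powRr1 //.
by rewrite pnatr_eq0 -lt0n.
Qed.

Lemma exprnK_powR {x : R} {n} : 0 <= x -> (0 < n)%N -> (x ^+ n) `^ n%:R^-1 = x.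
Proof.
move=> x0 n0; rewrite -powR_mulrn // -powRrM mulfV ?powRr1 //.
by rewrite pnatr_eq0 -lt0n.
Qed.

Lemma rapidE f : (forall n, 0 <= f n) ->
  rapid f <-> (fun n => f n `^ n%:R^-1) @ \oo --> 0.
Proof.
move=> f0; split => [rf | /cvgr0Pnorm_lt rootf rho rho0].
  apply/cvgr0Pnorm_lt => e e0; have e20 : 0 < e / 2 by rewrite divr_gt0.
  near=> n; have n0 : (0 < n)%N by near: n; apply: nbhs_infty_gt.
  have fn : f n <= (e / 2) ^+ n by near: n; apply: rf.
  rewrite ger0_norm ?powR_ge0 //.
  apply: (le_lt_trans (y := e / 2)); last by rewrite ltr_pdivrMr // ltr_pMr // ltr1n.
  rewrite -[leRHS](exprnK_powR (ltW e20) n0).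
  by apply: ge0_ler_powR; rewrite // ?nnegrE ?invr_ge0 ?f0 ?exprn_ge0 ?ltW.
near=> n; have n0 : (0 < n)%N by near: n; apply: nbhs_infty_gt.
have : `|f n `^ n%:R^-1| < rho by near: n; apply: rootf.
rewrite ger0_norm ?powR_ge0 // => /ltW rootn.
by rewrite -(powR_invnK (f0 n) n0); apply: lerXn2r; rewrite // ?nnegrE ?powR_ge0 ?ltW.
Unshelve. all: by end_near.
Qed.

Lemma rapid_le f g : rapid f -> (\forall n \near \oo, g n <= f n) -> rapid g.
Proof. by move=> rf gf rho /rf; apply: filterS2 gf => n; apply: le_trans. Qed.

Lemma rapidD f g : rapid f -> rapid g -> rapid (fun n => f n + g n).
Proof.
move=> rf rg rho rho0; have rho20 : 0 < rho / 2 by rewrite divr_gt0.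
near=> n; have n0 : (0 < n)%N by near: n; apply: nbhs_infty_gt.
have fn : f n <= (rho / 2) ^+ n by near: n; apply: rf.
have gn : g n <= (rho / 2) ^+ n by near: n; apply: rg.
have half := ler_expr_div (ltW rho0) (ler1n _ 2) n0.
by rewrite [leRHS](splitr (rho ^+ n)) lerD // (le_trans _ half).
Unshelve. all: by end_near.
Qed.

Lemma rapidMl (K : R) f : 0 <= K -> rapid f -> rapid (fun n => K * f n).
Proof.
move=> K0 rf rho rho0; have K1 : 1 <= K + 1 by rewrite lerDr.
have r0 : 0 < rho / (K + 1) by rewrite divr_gt0 // (lt_le_trans ltr01).
near=> n; have n0 : (0 < n)%N by near: n; apply: nbhs_infty_gt.
have fn : f n <= (rho / (K + 1)) ^+ n by near: n; apply: rf.
apply: le_trans (ler_wpM2l K0 (le_trans fn (ler_expr_div (ltW rho0) K1 n0))) _.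
rewrite mulrCA ler_piMr ?exprn_ge0 ?ltW //.
by rewrite ltr_pdivrMr ?(lt_le_trans ltr01) // mul1r ltrDl.
Unshelve. all: by end_near.
Qed.

Lemma rapidMX (L : R) f : 0 <= L -> rapid f -> rapid (fun n => f n * L ^+ n).
Proof.
move=> L0 rf rho rho0; have L1 : 0 < L + 1 by rewrite ltr_wpDl.
near=> n; have fn : f n <= (rho / (L + 1)) ^+ n by near: n; apply: rf; rewrite divr_gt0.
apply: le_trans (ler_wpM2r (exprn_ge0 n L0) fn) _.
rewrite -exprMn; apply: lerXn2r;
  rewrite ?nnegrE ?mulr_ge0 ?divr_ge0 ?invr_ge0 ?(ltW rho0) ?(ltW L1) //.
by rewrite mulrAC ler_pdivrMr // ler_pM2l // lerDl.
Unshelve. all: by end_near.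
Qed.

Lemma rapid_shift k f : rapid f -> rapid (fun n => f (n + k)%N).
Proof.
move=> rf rho rho0; have rho1 : 0 < rho + 1 by rewrite ltr_wpDl // ltW.
have r0 : 0 < rho / (rho + 1) by rewrite divr_gt0.
have r_le_rho : rho / (rho + 1) <= rho by rewrite ler_pdivrMr // ler_pMr // lerDr ltW.
have r_le1 : rho / (rho + 1) <= 1 by rewrite ler_pdivrMr // mul1r lerDl.
near=> n; have fn : f (n + k)%N <= (rho / (rho + 1)) ^+ (n + k).
  by near: n; exact: (cvg_addnr k _ (rf _ r0)).
apply: le_trans fn _; rewrite exprD.
apply: le_trans (ler_piMr (exprn_ge0 _ (ltW r0)) (exprn_ile1 _ (ltW r0) r_le1)) _.
by apply: lerXn2r; rewrite // nnegrE ltW.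
Unshelve. all: by end_near.
Qed.

Lemma rapid_cst (c : R) : 0 <= c -> rapid (fun=> c) -> c = 0.
Proof.
move=> c0 rc; apply/eqP; rewrite eq_le c0 andbT leNgt; apply/negP => cpos.
have c1 : 0 < c + 1 by rewrite ltr_wpDl.
have r0 : 0 < c / (c + 1) by rewrite divr_gt0.
have r_lt_c : c / (c + 1) < c by rewrite ltr_pdivrMr // ltr_pMr // ltrDr.
have r_le1 : c / (c + 1) <= 1 by rewrite ler_pdivrMr // mul1r lerDl.
near \oo => n; have cn : c <= (c / (c + 1)) ^+ (n + 1).
  by near: n; exact: (cvg_addnr 1 _ (rc _ r0)).
move: cn; apply/negP; rewrite -ltNge addn1 exprS.
exact: le_lt_trans (ler_piMr (ltW r0) (exprn_ile1 _ (ltW r0) r_le1)) r_lt_c.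
Unshelve. all: by end_near.
Qed.

End RapidDecay.

Section BanachStarAlgebra.
Set Implicit Arguments. Unset Strict Implicit.
Context {R : realType} {A : algType R[i]} (B : BanachStar A).
Local Notation N := (nrm B).
Implicit Types (s t : nat -> A) (a b c d l q w x y : A).

Lemma nrm0 : N 0 = 0.
Proof. exact/(nrm_eq0 B). Qed.

Lemma nrmN x : N (- x) = N x.
Proof. by rewrite -scaleN1r nrmZ normrN1 /= mul1r. Qed.

Lemma nrmX x n : N (x ^+ n) <= N x ^+ n.
Proof.
elim: n => [|n IH]; first by rewrite !expr0 nrm1.
by rewrite !exprS (le_trans (nrm_submul _ _ _)) // ler_wpM2l ?nrm_ge0.
Qed.

Lemma nrmM3 x y z : N (x * y * z) <= N x * N y * N z.
Proof.
apply: le_trans (nrm_submul _ _ _) _.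
by rewrite ler_wpM2r ?nrm_ge0 ?nrm_submul.
Qed.

Definition rapid_seq s := rapid (fun n => N (s n)).

Lemma rapid_seq_eq s t : (\forall n \near \oo, s n = t n) ->
  rapid_seq s -> rapid_seq t.
Proof. by move=> st /rapid_le; apply; apply: filterS st => n ->. Qed.

Lemma rapid_seq_eq0 s x : rapid_seq s -> (\forall n \near \oo, s n = x) -> x = 0.
Proof.
move=> rs sx; apply/(nrm_eq0 B)/rapid_cst; first exact: nrm_ge0.
by apply: rapid_seq_eq rs; apply: filterS sx.
Qed.

Lemma rapid_seqB s t : rapid_seq s -> rapid_seq t ->
  rapid_seq (fun n => s n - t n).
Proof.
move=> rs rt; apply: (rapid_le (rapidD rs rt)); apply: nearW => n.
by rewrite (le_trans (nrm_triangle _ _ _)) // nrmN.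
Qed.

Lemma rapid_seqMl x s : rapid_seq s -> rapid_seq (fun n => x * s n).
Proof.
move=> rs; apply: (rapid_le (rapidMl (nrm_ge0 B x) rs)).
by apply: nearW => n; apply: nrm_submul.
Qed.

Lemma rapid_seqMr x s : rapid_seq s -> rapid_seq (fun n => s n * x).
Proof.
move=> rs; apply: (rapid_le (rapidMl (nrm_ge0 B x) rs)).
by apply: nearW => n; rewrite mulrC; apply: nrm_submul.
Qed.

Lemma rapid_seqXl x s : rapid_seq s -> rapid_seq (fun n => x ^+ n * s n).
Proof.
move=> rs; apply: (rapid_le (rapidMX (nrm_ge0 B x) rs)); apply: nearW => n.
by rewrite mulrC (le_trans (nrm_submul _ _ _)) // ler_wpM2r ?nrm_ge0 ?nrmX.
Qed.

Lemma rapid_seqXr x s : rapid_seq s -> rapid_seq (fun n => s n * x ^+ n).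
Proof.
move=> rs; apply: (rapid_le (rapidMX (nrm_ge0 B x) rs)); apply: nearW => n.
by rewrite (le_trans (nrm_submul _ _ _)) // ler_wpM2l ?nrm_ge0 ?nrmX.
Qed.

Lemma rapid_seqS s : rapid_seq s -> rapid_seq (fun n => s n.+1).
Proof.
move=> /(rapid_shift 1) rs; apply: (rapid_le rs).
by apply: nearW => n; rewrite addn1.
Qed.

Lemma quasinilpotentE x : quasinilpotent B x <-> rapid_seq (fun n => x ^+ n).
Proof. by rewrite /rapid_seq rapidE // => n; apply: nrm_ge0. Qed.

Definition nrm_cvg s l := forall eps : R, 0 < eps ->
  \forall n \near \oo, N (s n - l) < eps.

Lemma nrm_cvg_unique s l l' : nrm_cvg s l -> nrm_cvg s l' -> l = l'.
Proof.
move=> sl sl'; apply/eqP; rewrite -subr_eq0; apply/eqP/(nrm_eq0 B).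
apply/eqP; rewrite eq_le nrm_ge0 andbT; apply/ler_addgt0Pr => eps eps0.
rewrite add0r; have eps20 : 0 < eps / 2 by rewrite divr_gt0.
near \oo => n.
have -> : l - l' = (s n - l') - (s n - l) by rewrite [RHS]addrC opprB addrA subrK.
apply: le_trans (nrm_triangle _ _ _) _; rewrite nrmN [leRHS](splitr eps).
by rewrite ltW // ltrD //; near: n; [apply: sl' | apply: sl].
Unshelve. all: by end_near.
Qed.

Lemma nrm_cvg_cst s l : (forall n, s n = l) -> nrm_cvg s l.
Proof. by move=> sl eps eps0; apply: nearW => n; rewrite sl subrr nrm0. Qed.

Lemma nrm_cvgS s l : nrm_cvg s l -> nrm_cvg (fun n => s n.+1) l.
Proof.
move=> sl eps eps0; near=> n; rewrite -addn1.
by near: n; exact: (cvg_addnr 1 _ (sl _ eps0)).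
Unshelve. all: by end_near.
Qed.

Lemma nrm_cvg_affine s l w x y :
  nrm_cvg s l -> nrm_cvg (fun n => w + x * s n * y) (w + x * l * y).
Proof.
move=> sl eps eps0; set K := (N x + 1) * (N y + 1).
have K0 : 0 < K by rewrite mulr_gt0 // ltr_wpDl ?nrm_ge0.
near=> n; have sn : N (s n - l) < eps / K by near: n; apply: sl; rewrite divr_gt0.
rewrite opprD addrACA subrr add0r -mulrBl -mulrBr.
apply: le_lt_trans (nrmM3 _ _ _) _; rewrite ltr_pdivlMr // in sn.
apply: le_lt_trans sn; rewrite /K [leRHS]mulrCA [leRHS]mulrA.
by rewrite ler_pM ?mulr_ge0 ?nrm_ge0 ?lerDl // ler_pM ?nrm_ge0 ?lerDl.
Unshelve. all: by end_near.
Qed.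

Lemma rapid_seq_cvg s : rapid_seq (fun n => s n.+1 - s n) -> exists l, nrm_cvg s l.
Proof.
move=> rs; have half0 : 0 < 2^-1 :> R by rewrite invr_gt0.
have [M _ sM] := rs _ half0.
have tail n j : (M <= n)%N ->
    N (s (n + j)%N - s n) <= 2 * 2^-1 ^+ n - 2 * 2^-1 ^+ (n + j).
  move=> Mn; elim: j => [|j IH]; first by rewrite addn0 !subrr nrm0.
  have -> : s (n + j.+1)%N - s n = (s (n + j).+1 - s (n + j)%N) + (s (n + j)%N - s n).
    by rewrite addnS addrA subrK.
  apply: le_trans (nrm_triangle _ _ _) _.
  have := sM (n + j)%N (leq_trans Mn (leq_addr _ _)); rewrite /= addnS exprS.
  by move: IH; set u := (2^-1) ^+ (n + j); set v := (2^-1) ^+ n; lra.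
have [] := @nrm_complete _ _ B s.
  move=> eps eps0; have eps20 : 0 < eps / 2 by rewrite divr_gt0.
  have : (fun n => 2^-1 ^+ n) @ \oo --> (0 : R).
    by apply: cvg_expr; rewrite ger0_norm ?invr_ge0 // invf_lt1 // ltr1n.
  move/cvgr0Pnorm_lt/(_ _ eps20) => [M' _ small].
  have key m n : (maxn M M' <= n <= m)%N -> N (s m - s n) < eps.
    rewrite geq_max => /andP[/andP[Mn M'n] nm]; rewrite -(subnKC nm).
    apply: le_lt_trans (tail _ _ Mn) _.
    have := small n M'n; rewrite /= ger0_norm ?exprn_ge0 ?invr_ge0 //.
    have : 0 <= 2^-1 ^+ (n + (m - n)) :> R by rewrite exprn_ge0 ?invr_ge0.
    lra.
  exists (maxn M M') => m n Mm Mn; case: (leqP n m) => nm.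
    by apply: key; rewrite Mn.
  by rewrite -nrmN opprB; apply: key; rewrite Mm ltnW.
by move=> l sl; exists l => eps /sl [M' sM']; exists M'.
Qed.

Lemma gDrazin_idem a b : a * (b * b) = b -> a * b = b * a ->
  (a * b) * (a * b) = a * b /\ a * (a * b) = (a * b) * a.
Proof.
move=> abb ab; split; last by rewrite -mulrA -ab.
by rewrite -mulrA [b * (a * b)]mulrA -ab -mulrA abb.
Qed.

Lemma gDrazin_invE a b : is_gDrazin_inv B a b <->
  [/\ a * (b * b) = b, a * b = b * a & rapid_seq (fun n => (1 - a * b) * a ^+ n)].
Proof.
rewrite /is_gDrazin_inv quasinilpotentE.
have powE : a * (b * b) = b -> a * b = b * a ->
    \forall n \near \oo, (a - a * a * b) ^+ n = (1 - a * b) * a ^+ n.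
  move=> abb ab; have [ee ae] := gDrazin_idem abb ab.
  near=> n; have n0 : (0 < n)%N by near: n; apply: nbhs_infty_gt.
  rewrite -mulrA -{1}[a]mulr1 -mulrBr -(prednK n0).
  by rewrite expr_mul_idem ?idem_subr1 ?comm_subr1.
split=> [[abb [ab rs]] | [abb ab rs]]; split=> //.
  by apply: rapid_seq_eq rs; apply: powE.
split=> //; apply: rapid_seq_eq rs; apply: filterS (powE abb ab) => n ->.
Unshelve. all: by end_near.
Qed.

Lemma gDrazin_inv_ortho a b c : is_gDrazin_inv B a b -> is_gDrazin_inv B a c ->
  (1 - a * c) * (a * b) = 0 /\ (a * b) * (1 - a * c) = 0.
Proof.
move=> /gDrazin_invE[abb ab _] /gDrazin_invE[acc ac rc].
have [ee _] := gDrazin_idem abb ab.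
have [_ ace] := gDrazin_idem acc ac.
have abE n : (0 < n)%N -> a * b = a ^+ n * b ^+ n.
  by case: n => // n _; rewrite -exprMn_comm // expr_idem.
have baE n : (0 < n)%N -> a * b = b ^+ n * a ^+ n.
  by case: n => // n _; rewrite -exprMn_comm // -ab expr_idem.
split; [apply: (rapid_seq_eq0 (rapid_seqXr b rc))
      | apply: (rapid_seq_eq0 (rapid_seqXl b rc))].
  near=> n; have n0 : (0 < n)%N by near: n; apply: nbhs_infty_gt.
  by rewrite -mulrA -abE.
near=> n; have n0 : (0 < n)%N by near: n; apply: nbhs_infty_gt.
by rewrite (baE n n0) (commrX n (esym (comm_subr1 ace))) mulrA.
Unshelve. all: by end_near.
Qed.

Lemma gDrazin_inv_unique a b c : is_gDrazin_inv B a b -> is_gDrazin_inv B a c -> b = c.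
Proof.
move=> gb gc; have [bc _] := gDrazin_inv_ortho gb gc.
have [_ bc'] := gDrazin_inv_ortho gc gb.
move: gb gc => /gDrazin_invE[abb ab _] /gDrazin_invE[acc _ _].
have abc : a * b = a * c.
  move: bc bc'; rewrite mulrBl mulrBr mul1r mulr1 => /subr0_eq e1 /subr0_eq e2.
  by rewrite e1 -e2.
have bab : b * (a * b) = b by rewrite mulrA -ab -mulrA abb.
by rewrite -bab abc mulrA -ab abc -mulrA acc.
Qed.

Lemma gcEP_invE a x : is_gcEP_inv B a x <->
  [/\ x = a * (x * x), star B (a * x) = a * x &
      rapid_seq (fun n => a ^+ n - x * a ^+ n.+1)].
Proof.
have nrm_ge0' n : 0 <= N (a ^+ n - x * a ^+ n.+1) by apply: nrm_ge0.
by split=> [[xE [sx /(rapidE nrm_ge0') rs]] | [xE sx /(rapidE nrm_ge0') rs]].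
Qed.

Lemma expr_mulr_ax a x n : x = a * (x * x) -> a ^+ n.+1 * x ^+ n.+1 = a * x.
Proof.
move=> xE; elim: n => [|n IH]; first by rewrite !expr1.
have -> : a ^+ n.+2 * x ^+ n.+2 = a ^+ n.+1 * (a * (x * x)) * x ^+ n.
  by rewrite exprSr (exprS x n.+1) (exprS x n) !mulrA.
by rewrite -xE -mulrA -exprS.
Qed.

(* w (a x) = v s_(n+1) x^(n+1) for every n: a constant that decays rapidly. *)
Lemma mul_ax_eq0_rapid a x w v s : x = a * (x * x) -> rapid_seq s ->
  (forall n, w * a ^+ n = v * s n) -> w * (a * x) = 0.
Proof.
move=> xE rs was.
apply: (rapid_seq_eq0 (rapid_seqMr x (rapid_seqXr x (rapid_seqMl v (rapid_seqS rs))))).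
apply: nearW => n; rewrite -was -mulrA -exprSr -mulrA.
by rewrite expr_mulr_ax.
Qed.

Section GcEPInverse.
Variables a x : A.
Hypothesis gx : is_gcEP_inv B a x.

Let xE : x = a * (x * x). Proof. by case/gcEP_invE: gx. Qed.

Lemma gcEP_xaax : x * a * (a * x) = a * x.
Proof.
case/gcEP_invE: gx => _ _ rs; apply/eqP; rewrite -mul1Bl_eq0; apply/eqP.
apply: (mul_ax_eq0_rapid (v := 1) xE rs) => n.
by rewrite mul1r mulrBl mul1r -mulrA -exprS.
Qed.

Lemma gcEP_xax : x * a * x = x.
Proof. by rewrite {2}xE !mulrA -[x * a * a * x]mulrA gcEP_xaax -mulrA -xE. Qed.

Lemma gcEP_idem : (a * x) * (a * x) = a * x.
Proof. by rewrite -mulrA [x * (a * x)]mulrA gcEP_xax. Qed.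

Lemma gcEP_proj : is_projection B (a * x).
Proof. by split; [rewrite gcEP_idem | case/gcEP_invE: gx]. Qed.

Lemma gcEP_ap : a * (a * x) = (a * x) * a * (a * x).
Proof. by rewrite -{1}gcEP_xaax !mulrA. Qed.

Lemma gcEP_compl_expr n :
  (1 - a * x) * a ^+ n = (1 - a * x) * (a ^+ n - x * a ^+ n.+1).
Proof.
have xK : (1 - a * x) * x = 0 by rewrite mulrBl mul1r -mulrA -xE subrr.
by rewrite [RHS]mulrBr (mulrA _ x) xK mul0r subr0.
Qed.

End GcEPInverse.

Lemma gcEP_inv_unique a x y : is_gcEP_inv B a x -> is_gcEP_inv B a y -> x = y.
Proof.
have ortho x' y' : is_gcEP_inv B a x' -> is_gcEP_inv B a y' ->
    a * x' = (a * y') * (a * x').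
  move=> gx' gy'; have /gcEP_invE[x'E _ _] := gx'; have /gcEP_invE[_ _ rs] := gy'.
  apply/esym/eqP; rewrite -mul1Bl_eq0.
  by apply/eqP/(mul_ax_eq0_rapid x'E rs)/gcEP_compl_expr.
move=> gx gy; have /gcEP_invE[_ sx _] := gx; have /gcEP_invE[yE sy _] := gy.
have axy : a * x = a * y by rewrite (ortho _ _ gx gy) -sy -sx -starM -ortho.
rewrite -(gcEP_xax gx) -mulrA axy {1}yE !mulrA -[x * a * a * y]mulrA -axy.
by rewrite (gcEP_xaax gx) axy -mulrA -yE.
Qed.

Lemma lann_eqP d q : lann d = lann q <-> (forall y, y * d = 0 <-> y * q = 0).
Proof.
split=> [/seteqP[dq qd] y | dq]; first by split=> [/dq | /qd].
by apply/seteqP; split=> y /dq.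
Qed.

Lemma gcEP_of_gDrazin a d q : is_gDrazin_inv B a d -> is_projection B q ->
  lann d = lann q -> is_gcEP_inv B a (d * q).
Proof.
move=> /gDrazin_invE[add ad rs] [qq sq] /lann_eqP L.
have [_ ae] := gDrazin_idem add ad.
have qd : q * d = d.
  by apply/eqP; rewrite -mul1Bl_eq0; apply/eqP/L; rewrite mulrBl mul1r -qq subrr.
have adq : a * d * q = q.
  by apply/eqP; rewrite -mul1Bl_eq0; apply/eqP/L; rewrite mulrBl mul1r -mulrA add subrr.
have qad : q * (a * d) = a * d by rewrite ad mulrA qd.
have dad : d * (a * d) = d by rewrite mulrA -ad -mulrA add.
apply/gcEP_invE; split; first by rewrite !mulrA -[a * d * q * d]mulrA qd -(mulrA a) add.
  by rewrite mulrA adq -sq.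
apply: (rapid_seq_eq _ (rapid_seqB rs (rapid_seqMl (d * q) (rapid_seqS rs)))).
have l1 n : (1 - a * d) * a ^+ n = a ^+ n - d * a ^+ n.+1.
  by rewrite mulrBl mul1r ad -mulrA -exprS.
have l2 n : d * q * ((1 - a * d) * a ^+ n) = d * q * a ^+ n - d * a ^+ n.
  by rewrite mulrA -(mulrA d) mulrBr mulr1 qad mulrBr dad mulrBl.
by apply: nearW => n; rewrite l1 l2 opprB addrA subrK.
Qed.

Section GcEPToGDrazin.
Variables a x : A.
Hypothesis gx : is_gcEP_inv B a x.
Local Notation p := (a * x).
Local Notation w := (x * x * a * (1 - p)).

Let xE : x = a * (x * x). Proof. by case/gcEP_invE: gx. Qed.
Let px : p * x = x. Proof. by rewrite -mulrA -xE. Qed.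
Let wp : w * p = 0.
Proof. by rewrite -mulrA mulrBl mul1r (gcEP_idem gx) subrr mulr0. Qed.

Let ser n := \sum_(0 <= k < n) x ^+ k * w * a ^+ k.

Let ser_fix n : ser n.+1 = w + x * ser n * a.
Proof.
rewrite /ser big_nat_recl // expr0 mul1r mulr1 mulr_sumr mulr_suml; congr (_ + _).
by apply: eq_bigr => k _; rewrite /= exprS exprSr !mulrA.
Qed.

Let ser_incr n : ser n.+1 - ser n = x ^+ n * w * a ^+ n.
Proof. by rewrite /ser big_nat_recr //= addrAC subrr add0r. Qed.

Let ser_p n : ser n * p = 0.
Proof.
elim: n => [|n IH]; first by rewrite /ser big_geq ?mul0r.
rewrite ser_fix mulrDl wp add0r -mulrA (gcEP_ap gx).
have -> : x * ser n * (p * a * p) = x * (ser n * p) * (a * p) by rewrite !mulrA.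
by rewrite IH mulr0 mul0r.
Qed.

(* X is the corner p A (1 - p) of a^d; the equation X = w + x X a is what
   makes x + X commute with a. *)
Lemma gcEP_sylvester : exists X, [/\ X * p = 0, p * X = X & X = w + x * X * a].
Proof.
have [X sX] : exists X, nrm_cvg ser X.
  apply: rapid_seq_cvg; case/gcEP_invE: gx => _ _ rs.
  apply: (rapid_seq_eq _ (rapid_seqXl x (rapid_seqMl w rs))); apply: nearW => n.
  by rewrite ser_incr -!mulrA (gcEP_compl_expr gx).
have Xp : X * p = 0.
  have : nrm_cvg (fun n => 0 + 1 * ser n * p) 0.
    by apply: nrm_cvg_cst => n; rewrite add0r mul1r ser_p.
  by move/(nrm_cvg_unique (nrm_cvg_affine 0 1 p sX)); rewrite add0r mul1r.
have XE : X = w + x * X * a.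
  have := nrm_cvg_affine w x a sX.
  rewrite (_ : (fun n => _) = (fun n => ser n.+1)).
    exact: nrm_cvg_unique (nrm_cvgS sX).
  by apply/funext => n; rewrite ser_fix.
by exists X; split=> //; rewrite {1}XE mulrDr !mulrA px -XE.
Qed.

Lemma gDrazin_of_gcEP : exists2 d, is_gDrazin_inv B a d & lann d = lann p.
Proof.
have [X [Xp pX XE]] := gcEP_sylvester.
have xax := gcEP_xax gx; have xap := gcEP_xaax gx; have ap := gcEP_ap gx.
have aw : a * w = x * a - p.
  by rewrite !mulrA -(mulrA a) -xE mulrBr mulr1 xap.
have aX : a * X = x * a - p + X * a.
  by rewrite {1}XE mulrDr aw !mulrA pX.
pose d := x + X.
have ad : a * d = x * a + X * a by rewrite mulrDr aX addrA [a * x + _]addrC subrK.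
have da : a * d = d * a by rewrite ad mulrDl.
have xaX : x * a * X = X by rewrite -pX mulrA xap.
have XaX : X * a * X = 0.
  by rewrite -{2}pX mulrA -(mulrA X a) ap !mulrA -(mulrA X a x) Xp !mul0r.
have add : a * (d * d) = d.
  by rewrite mulrA ad /d !mulrDr !mulrDl xax xaX -(mulrA X a x) Xp XaX !addr0.
have adp : a * d * p = p.
  by rewrite ad mulrDl xap -(mulrA X) ap !mulrA -(mulrA X a x) Xp !mul0r addr0.
exists d.
  apply/gDrazin_invE; split=> //; case/gcEP_invE: gx => _ _ rs.
  apply: (rapid_seq_eq _ (rapid_seqMl (1 - a * d) (rapid_seqMl (1 - p) rs))).
  have e1 : (1 - a * d) * (1 - p) = 1 - a * d.
    by rewrite mulrBr mulr1 mulrBl mul1r adp subrr subr0.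
  by apply: nearW => n; rewrite -(gcEP_compl_expr gx) mulrA e1.
have dap : d * (a * p) = p by rewrite mulrA -da adp.
have pd : p * d = d by rewrite /d mulrDr px pX.
apply/lann_eqP => y; split=> [yd | yp]; first by rewrite -dap mulrA yd mul0r.
by rewrite -pd mulrA yp mul0r.
Qed.

End GcEPToGDrazin.

Lemma gDrazin_inv_eq a b : is_gDrazin_inv B a b -> gDrazin_inv B a = b.
Proof. by move=> gb; apply: (gDrazin_inv_unique _ gb); apply: xgetI gb. Qed.

Lemma gcEP_inv_eq a x : is_gcEP_inv B a x -> gcEP_inv B a = x.
Proof. by move=> gx; apply: (gcEP_inv_unique _ gx); apply: xgetI gx. Qed.

End BanachStarAlgebra.

Theorem theorem2p3 (R : realType) (A : algType R[i]) (B : BanachStar A) (a : A) :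
  (gcEP_invertible B a <->
     (gDrazin_invertible B a /\
      exists q : A, is_projection B q /\ lann (gDrazin_inv B a) = lann q))
  /\
  (forall q : A, gcEP_invertible B a -> is_projection B q ->
     lann (gDrazin_inv B a) = lann q ->
     gcEP_inv B a = gDrazin_inv B a * q).
Proof.
split; [split|].
- case=> x gx; have [d gd Ld] := gDrazin_of_gcEP gx.
  rewrite (gDrazin_inv_eq gd); split; first by exists d.
  by exists (a * x); split; first exact: gcEP_proj gx.
- case=> [[d gd] [q [pq L]]]; exists (gDrazin_inv B a * q).
  by apply: gcEP_of_gDrazin pq L; rewrite (gDrazin_inv_eq gd).
- move=> q [x gx] pq L; have [d gd _] := gDrazin_of_gcEP gx.
  apply: gcEP_inv_eq; apply: gcEP_of_gDrazin pq L.
  by rewrite (gDrazin_inv_eq gd).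
Qed.
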